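(* Let $K$ be a finite set with $|K|=N$, let $\mathcal S$ be a finite collection of nonempty subsets of $K$, let $\mathbf r=\{r^{(S)}:S\in\mathcal S\}$ be an online rule associated to $\mathcal S$, and let $\lambda>1$. Let $y\in\mathbb R^K$ be arbitrary (no probabilistic assumption) and let $\rho$ be any ordering of $K$. Let $\hat y\in\mathbb R^K$ be the output of the aggregation algorithm $\mathcal A(\mathbf r,\mathcal S,\lambda)$ run on $y$ revealed in the order $\rho$, and let $\hat y^{(S)}\in\mathbb R^S$ be the predictions of expert $S$. Then for every $S\in\mathcal S$, $$\sum_{s\in S}(y_s-\hat y_s)^2\le \sum_{s\in S}\big(y_s-\hat y^{(S)}_s\big)^2+8\lambda^2\log\big(e|\mathcal S|\big)+2\|y_S-\Pi_\lambda y_S\|^2+4\lambda^2\sum_{s\in S}\mathbf 1(|y_s|>\lambda).$$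
   Context: An ordering of $K$ is a bijection $\rho:[N]\to K$; write $\rho[a:b]=\{\rho(a),\dots,\rho(b)\}$ (empty if $b<a$). For $A\subset K$ and $z\in\mathbb R^K$, $z_A\in\mathbb R^A$ is the restriction. An online rule $r^{(S)}$ for a set $S$ is a family of measurable maps $r^{(S)}_{U,s}:\mathbb R^U\to\mathbb R$ indexed by $U\subset S$ and $s\in S\setminus U$; an online rule $\mathbf r$ associated to $\mathcal S$ is a choice of such a rule for every $S\in\mathcal S$. Given an ordering $\rho$ and data $y$, expert $S$ predicts at each $\rho(t)\in S$ the value $\hat y^{(S)}_{\rho(t)}=r^{(S)}_{\rho[1:t-1]\cap S,\,\rho(t)}\big(y_{\rho[1:t-1]\cap S}\big)$; this defines $\hat y^{(S)}\in\mathbb R^S$. Truncation: $T_\lambda(x)=\min\{\max\{x,-\lambda\},\lambda\}$, and for a vector $z\in\mathbb R^A$, $(\Pi_\lambda z)_a=T_\lambda(z_a)$ (the $\ell^2$-projection onto the $\ell^\infty$-ball of radius $\lambda$). Aggregation algorithm $\mathcal A(\mathbf r,\mathcal S,\lambda)$: set $\alpha=1/(8\lambda^2)$ and $w_{S,1}=1/|\mathcal S|$ for all $S\in\mathcal S$. For $t=1,\dots,N$: (1) $\rho(t)$ is revealed; (2) the active set is $A_t=\{S\in\mathcal S:\rho(t)\in S \text{ and } \rho(t')\in S\text{ for some }t'<t\}$ if $t>1$, and $A_1=\{S\in\mathcal S:\rho(1)\in S\}$; (3) predict $\hat y_{\rho(t)}=\sum_{S\in A_t}\hat w_{S,t}\,T_\lambda(\hat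 y^{(S)}_{\rho(t)})$ with $\hat w_{S,t}=w_{S,t}/\sum_{S'\in A_t}w_{S',t}$ (an empty sum is $0$); (4) after $y_{\rho(t)}$ is revealed, set $w_{S,t+1}=w_{S,t}$ for $S\notin A_t$ and, for $S\in A_t$, $w_{S,t+1}=\dfrac{w_{S,t}e^{-\alpha\ell_{S,t}}}{\sum_{S'\in A_t}w_{S',t}e^{-\alpha\ell_{S',t}}}\sum_{S'\in A_t}w_{S',t}$, where $\ell_{S,t}=\big(T_\lambda(y_{\rho(t)})-T_\lambda(\hat y^{(S)}_{\rho(t)})\big)^2$. The output is $\hat y=(\hat y_s)_{s\in K}$. *)

From HB Require Import structures.
From mathcomp Require Import all_boot all_order all_algebra.
From mathcomp Require Import all_classical all_reals all_analysis.
Set Implicit Arguments. Unset Strict Implicit. Unset Printing Implicit Defensive.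
Import Order.TTheory GRing.Theory Num.Theory.
Local Open Scope ring_scope.

Section Aggregation.
Variables (R : realType) (K : finType).

Definition trunc (lam x : R) : R := Num.min (Num.max x (- lam)) lam.

(* z_U, represented as a vector of R^K padded with zeros outside U *)
Definition restrict (U : {set K}) (z : K -> R) : K -> R :=
  fun k => if k \in U then z k else 0.

(* The map
   r^{(S)}_{U,s} : R^U -> R is represented by z |-> r S U s z, and is only
   ever applied to restricted (zero-padded) data restrict U y, so it depends
   on y only through y_U. *)
Definition online_rule := {set K} -> {set K} -> K -> (K -> R) -> R.

Variables (Ss : {set {set K}}) (r : online_rule) (lam : R)
          (rho : seq K) (y : K -> R).

(* rho[1:t] as a set : the first t revealed points (0-based steps) *)
Definition before (t : nat) : {set K} := [set x in take t rho].

Definition expert_pred (S : {set K}) (s : K) : R :=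
  let U := before (index s rho) :&: S in r S U s (restrict U y).

(* active set at step t where s = rho(t) is revealed *)
Definition active (t : nat) (s : K) : {set {set K}} :=
  [set S in Ss | (s \in S) &&
     ((t == 0)%N || [exists x in before t, x \in S])].

Definition alpha : R := 1 / (8 * lam ^+ 2).

Definition loss (S : {set K}) (s : K) : R :=
  (trunc lam (y s) - trunc lam (expert_pred S s)) ^+ 2.

Definition agg_pred (w : {set K} -> R) (t : nat) (s : K) : R :=
  let A := active t s in
  \sum_(S in A) (w S / (\sum_(S' in A) w S')) * trunc lam (expert_pred S s).

Definition update (w : {set K} -> R) (t : nat) (s : K) : {set K} -> R :=
  let A := active t s in
  fun S => if S \in A then
     w S * expR (- alpha * loss S s)
       / (\sum_(S' in A) w S' * expR (- alpha * loss S' s))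
       * (\sum_(S' in A) w S')
   else w S.

(* weights w_{.,t} before step t (0-based) *)
Fixpoint weights (t : nat) : {set K} -> R :=
  match t with
  | 0%N => fun _ => 1 / (#|Ss|%:R)
  | t'.+1 => match drop t' rho with
             | s :: _ => update (weights t') t' s
             | [::] => weights t'
             end
  end.

Definition agg_output (s : K) : R :=
  agg_pred (weights (index s rho)) (index s rho) s.

End Aggregation.

From HB Require Import structures.
From mathcomp Require Import all_boot all_order all_algebra.
From mathcomp Require Import all_classical all_reals all_analysis.
From mathcomp Require Import ring lra.
Import Order.TTheory GRing.Theory Num.Theory.
Import numFieldNormedType.Exports.
Local Open Scope ring_scope.

(* For [alpha = 1 / (8 lam^2)] the map [z |-> expR (- alpha z^2)] is concave on
   [|z| <= 2 lam], so by Jensen the truncated square loss is alpha-exp-concave: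
   the exponential update shrinks the mass of the active experts at least as fast
   as [expR (- alpha * loss of the aggregate)].  As the total weight stays 1, the
   weight of a fixed expert [S], which starts at [1 / |Ss|], is at least
   [expR (alpha * R_S) / |Ss|], where [R_S] is the regret accumulated while [S] is
   active; hence [R_S <= 8 lam^2 ln |Ss|].  [S] is inactive only at its first point,
   costing at most [4 lam^2 <= 8 lam^2 ln e].  Undoing the truncation of [y] costs
   [2 (y - T y)^2 + 4 lam^2] at the points where [|y| > lam], and nothing elsewhere. *)

Section ExpSquareConcavity.
Context {R : realType}.

(* The tangent at [u] to [z |-> expR (- al * z ^+ 2)], divided by that function. *)
Definition tangent_ratio (al u z : R) : R :=
  (1 + 2 * al * u * (u - z)) * expR (al * (z ^+ 2 - u ^+ 2)).

Lemma is_derive_tangent_ratio (al u x : R) :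
  is_derive x 1 (tangent_ratio al u)
    (2 * al * (x - u) * (1 - 2 * al * u * x) * expR (al * (x ^+ 2 - u ^+ 2))).
Proof.
have dexp : is_derive x 1 (fun z => expR (al * (z ^+ 2 - u ^+ 2)))
    (expR (al * (x ^+ 2 - u ^+ 2)) * (al * (2 * x))).
  by apply: is_derive1_comp; apply: is_derive_eq; rewrite /GRing.scale /=; ring.
have dlin : is_derive x 1 (fun z : R => 1 + 2 * al * u * (u - z)) (- (2 * al * u)).
  by apply: is_derive_eq; rewrite /GRing.scale /=; ring.
have := is_deriveM dlin dexp; rewrite -/(tangent_ratio al u) => /is_derive_eq; apply.
by rewrite /GRing.scale /=; ring.
Qed.

Lemma tangent_ratioNN (al u z : R) : tangent_ratio al (- u) (- z) = tangent_ratio al u z.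
Proof. by rewrite /tangent_ratio !sqrrN; congr (_ * _); ring. Qed.

Lemma tangent_ratio_ge1 (al u v : R) : 0 <= al -> u <= v ->
  (forall z, u <= z <= v -> 2 * al * u * z <= 1) -> 1 <= tangent_ratio al u v.
Proof.
move=> al_ge0 uv uz_le1.
have -> : 1 = tangent_ratio al u u by rewrite /tangent_ratio !subrr !mulr0 addr0 mul1r expR0.
have derivable_ratio x : derivable (tangent_ratio al u) x 1.
  exact: (@ex_derive _ _ _ _ _ _ _ (is_derive_tangent_ratio al u x)).
apply: (@ger0_derive1_ndecr _ _ u v) => //.
- move=> x; rewrite in_itv /= => /andP[ux xv].
  rewrite derive1E (@derive_val _ _ _ _ _ _ _ (is_derive_tangent_ratio al u x)).
  have := uz_le1 x; rewrite (ltW ux) (ltW xv) => /(_ isT) uxz.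
  apply: mulr_ge0; last exact: expR_ge0.
  by apply: mulr_ge0; [apply: mulr_ge0|]; lra.
- apply: continuous_subspaceT => x.
  exact/differentiable_continuous/derivable1_diffP.
Qed.

Lemma expR_sq_le_tangent (al u v : R) : 0 <= al ->
  2 * al * u ^+ 2 <= 1 -> 2 * al * v ^+ 2 <= 1 ->
  expR (- al * v ^+ 2) <= (1 + 2 * al * u * (u - v)) * expR (- al * u ^+ 2).
Proof.
move=> al_ge0 hu hv.
suff : 1 <= tangent_ratio al u v.
  move/(ler_wpM2r (expR_ge0 (- al * v ^+ 2))).
  rewrite mul1r /tangent_ratio -[_ * expR _ * expR _]mulrA -expRD.
  by have -> : al * (v ^+ 2 - u ^+ 2) + - al * v ^+ 2 = - al * u ^+ 2 by ring.
wlog uv : u v hu hv / u <= v.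
  move=> wlog_uv; case: (leP u v) => [|vu]; first exact: wlog_uv.
  by rewrite -tangent_ratioNN; apply: wlog_uv; rewrite ?sqrrN //; lra.
apply: tangent_ratio_ge1 => // z /andP[uz zv].
have hz : 2 * al * z ^+ 2 <= 1.
  have [z_ge0|z_lt0] := leP 0 z.
    apply: le_trans hv; apply: ler_wpM2l; first lra.
    by rewrite ler_sqr ?nnegrE //; lra.
  apply: le_trans hu; apply: ler_wpM2l; first lra.
  by rewrite -sqrrN -[u ^+ 2]sqrrN ler_sqr ?nnegrE //; lra.
have := mulr_ge0 al_ge0 (sqr_ge0 (u - z)); nra.
Qed.

Lemma norm_convex_comb_le (I : finType) (A : {set I}) (p x : I -> R) (B : R) :
  0 <= B -> (forall i, i \in A -> 0 <= p i) -> \sum_(i in A) p i <= 1 ->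
  (forall i, i \in A -> `|x i| <= B) -> `|\sum_(i in A) p i * x i| <= B.
Proof.
move=> B_ge0 p_ge0 p_le1 xB.
apply: le_trans (ler_norm_sum _ _ _) _.
apply: (@le_trans _ _ (\sum_(i in A) p i * B)).
  apply: ler_sum => i iA; rewrite normrM ger0_norm ?p_ge0 //.
  by apply: ler_wpM2l; [exact: p_ge0 | exact: xB].
by rewrite -mulr_suml -[X in _ <= X]mul1r; apply: ler_wpM2r.
Qed.

Lemma expR_sq_jensen (I : finType) (A : {set I}) (p v : I -> R) (al B : R) :
  0 <= al -> 0 <= B -> 2 * al * B ^+ 2 <= 1 ->
  (forall i, i \in A -> 0 <= p i) -> \sum_(i in A) p i = 1 ->
  (forall i, i \in A -> `|v i| <= B) ->
  \sum_(i in A) p i * expR (- al * v i ^+ 2)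
    <= expR (- al * (\sum_(i in A) p i * v i) ^+ 2).
Proof.
move=> al_ge0 B_ge0 alB p_ge0 p_sum1 vB.
have sqr_le x : `|x| <= B -> 2 * al * x ^+ 2 <= 1.
  move=> xB; apply: le_trans alB; apply: ler_wpM2l; first lra.
  by rewrite -real_normK ?num_real // ler_sqr ?nnegrE.
set u := \sum_(i in A) p i * v i.
have hu : 2 * al * u ^+ 2 <= 1.
  by apply/sqr_le/norm_convex_comb_le => //; rewrite p_sum1.
set E := expR (- al * u ^+ 2).
apply: (@le_trans _ _ (\sum_(i in A) p i * ((1 + 2 * al * u * (u - v i)) * E))).
  apply: ler_sum => i iA; apply: ler_wpM2l; first exact: p_ge0.
  exact/expR_sq_le_tangent/sqr_le/vB.
have -> : \sum_(i in A) p i * ((1 + 2 * al * u * (u - v i)) * E) =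
    \sum_(i in A) (E * (1 + 2 * al * u * u) * p i - E * (2 * al * u) * (p i * v i)).
  by apply: eq_bigr => i _; ring.
rewrite sumrB -!mulr_sumr p_sum1 -/u.
by rewrite [X in X <= _](_ : _ = E) //; ring.
Qed.

End ExpSquareConcavity.

Section Truncation.
Context {R : realType}.
Implicit Types lam x z m a b : R.

Lemma trunc_cases lam x : 0 <= lam ->
  [\/ x <= - lam /\ trunc lam x = - lam, lam <= x /\ trunc lam x = lam
    | - lam <= x <= lam /\ trunc lam x = x].
Proof.
move=> lam_ge0; rewrite /trunc maxEle minEle.
have [x_le|x_gt] := leP x (- lam); first by apply: Or31; rewrite ifT //; lra.
have [x_ge|x_lt] := leP lam x.
  by apply: Or32; split => //; case: ifP => //; lra.
by apply: Or33; split; [apply/andP; split; lra | rewrite ifT // ltW].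
Qed.

Lemma norm_trunc_le lam x : 0 <= lam -> `|trunc lam x| <= lam.
Proof.
move=> lam_ge0; rewrite ler_norml.
by case: (trunc_cases lam x lam_ge0) => [[_ ->]|[_ ->]|[/andP[? ?] ->]];
  apply/andP; split; lra.
Qed.

Lemma trunc_id lam x : `|x| <= lam -> trunc lam x = x.
Proof.
move=> x_le; have lam_ge0 : 0 <= lam by apply: le_trans x_le.
move: x_le; rewrite ler_norml => /andP[? ?].
by case: (trunc_cases lam x lam_ge0) => [[? ->]|[? ->]|[_ ->]] //; lra.
Qed.

Lemma sqr_trunc_sub_le lam x z : 0 <= lam ->
  (trunc lam x - trunc lam z) ^+ 2 <= (x - z) ^+ 2.
Proof.
move=> lam_ge0.
have [[d_ge0 d_le]|[d_ge d_le0]] :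
    (0 <= trunc lam x - trunc lam z /\ trunc lam x - trunc lam z <= x - z) \/
    (x - z <= trunc lam x - trunc lam z /\ trunc lam x - trunc lam z <= 0).
  case: (trunc_cases lam x lam_ge0) => [[? ->]|[? ->]|[/andP[? ?] ->]];
  case: (trunc_cases lam z lam_ge0) => [[? ->]|[? ->]|[/andP[? ?] ->]];
  (by left; lra) || (by right; lra) || (case: (leP x z) => ?; [right|left]; lra).
all: nra.
Qed.

Lemma sqr_sub_le_4sqr {lam a b} : `|a| <= lam -> `|b| <= lam -> (a - b) ^+ 2 <= 4 * lam ^+ 2.
Proof.
rewrite !ler_norml => /andP[? ?] /andP[? ?].
have : 0 <= (2 * lam - (a - b)) * (2 * lam + (a - b)) by apply: mulr_ge0; lra.
nra.
Qed.

Lemma sqr_sub_le_trunc lam x m : `|m| <= lam ->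
  (x - m) ^+ 2 <= (trunc lam x - m) ^+ 2 + 2 * (x - trunc lam x) ^+ 2
    + 4 * lam ^+ 2 * (if lam < `|x| then 1 else 0).
Proof.
move=> m_le; have lam_ge0 : 0 <= lam by apply: le_trans m_le.
case: ifP => [_|/negbT]; last first.
  by rewrite -leNgt => /trunc_id ->; rewrite subrr expr0n /= !mulr0 !addr0.
have := sqr_sub_le_4sqr (norm_trunc_le lam x lam_ge0) m_le; rewrite mulr1.
have := sqr_ge0 ((x - trunc lam x) - (trunc lam x - m)); nra.
Qed.

End Truncation.

Lemma ln_expR1M (R : realType) (n : R) : 0 < n -> ln (expR 1 * n) = 1 + ln n.
Proof. by move=> n_gt0; rewrite lnM ?posrE ?expR_gt0 // expRK. Qed.

Lemma sumr_gt0_mem (R : numDomainType) (I : finType) (B : {set I}) (f : I -> R) i :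
  i \in B -> (forall j, 0 < f j) -> 0 < \sum_(j in B) f j.
Proof.
move=> iB f_gt0; rewrite (bigD1 i) //=.
by apply: ltr_wpDr; [apply: sumr_ge0 => j _; exact/ltW | exact: f_gt0].
Qed.

Section ExponentialWeights.
Variables (R : realType) (K : finType) (Ss : {set {set K}}) (r : online_rule R K)
  (lam : R) (rho : seq K) (y : K -> R) (x0 : K).
Hypothesis lam_gt0 : 0 < lam.
Hypothesis card_Ss_gt0 : (0 < #|Ss|)%N.
Hypothesis rho_uniq : uniq rho.
Hypothesis rho_total : forall k : K, k \in rho.

Local Notation w := (weights Ss r lam rho y).
Local Notation A := (active Ss rho).
Local Notation ell := (loss r lam rho y).
Local Notation expert := (expert_pred r rho y).
Local Notation agg := (agg_pred Ss r lam rho y).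
Local Notation upd := (update Ss r lam rho y).

Lemma mul_alpha_8sqr : alpha lam * (8 * lam ^+ 2) = 1.
Proof. by rewrite /alpha mul1r mulVf // mulf_neq0 ?pnatr_eq0 // expf_neq0 // gt_eqF. Qed.

Lemma alpha_ge0 : 0 <= alpha lam.
Proof. by rewrite /alpha divr_ge0 // mulr_ge0 // sqr_ge0. Qed.

Lemma weights_succ t : (t < size rho)%N -> w t.+1 = upd (w t) t (nth x0 rho t).
Proof. by move=> t_lt; rewrite /= (drop_nth x0 t_lt). Qed.

Lemma weights_gt0 t S : 0 < w t S.
Proof.
elim: t S => [|t IH] S; first by rewrite /= mul1r invr_gt0 ltr0n.
have [t_lt|t_ge] := ltnP t (size rho); last by rewrite /= drop_oversize.
rewrite weights_succ // /update; case: ifP => // SA.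
have expw_gt0 S' : 0 < w t S' * expR (- alpha lam * ell S' (nth x0 rho t)).
  by rewrite mulr_gt0 ?expR_gt0.
by rewrite !mulr_gt0 ?invr_gt0 ?expR_gt0 //; apply: sumr_gt0_mem SA _.
Qed.

Lemma sum_update_active W t s : (forall S, 0 < W S) ->
  \sum_(S in A t s) upd W t s S = \sum_(S in A t s) W S.
Proof.
move=> W_gt0; have [->|[S1 S1A]] := set_0Vmem (A t s); first by rewrite !big_set0.
rewrite (eq_bigr (fun S => W S * expR (- alpha lam * ell S s) /
    (\sum_(S' in A t s) W S' * expR (- alpha lam * ell S' s)) *
    (\sum_(S' in A t s) W S'))); last by move=> S SA; rewrite /update SA.
rewrite -mulr_suml -mulr_suml mulfV ?mul1r // gt_eqF //.
by apply: sumr_gt0_mem S1A _ => S; rewrite mulr_gt0 ?expR_gt0.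
Qed.

Lemma weights_sum1 t : \sum_(S in Ss) w t S = 1.
Proof.
elim: t => [|t IH].
  by rewrite /= sumr_const mul1r -[X in X *+ _]mulr1 -mulrnAr mulVf // pnatr_eq0 -lt0n.
have [t_lt|t_ge] := ltnP t (size rho); last by rewrite /= drop_oversize.
rewrite weights_succ // -IH; set s := nth x0 rho t.
have activeP S : (S \in Ss) && (S \in A t s) = (S \in A t s).
  by apply: andb_idl; rewrite inE => /andP[].
rewrite (bigID (mem (A t s))) [RHS](bigID (mem (A t s))) /=.
rewrite !(eq_bigl _ _ activeP) sum_update_active; last exact: weights_gt0.
by congr (_ + _); apply: eq_bigr => S /andP[_ /negbTE SnA]; rewrite /update SnA.
Qed.

Lemma weights_le1 t S : S \in Ss -> w t S <= 1.
Proof.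
move=> SSs; rewrite -(weights_sum1 t) (bigD1 S) //= lerDl.
by apply: sumr_ge0 => S' _; exact/ltW/weights_gt0.
Qed.

Lemma agg_pred_norm_le W t s : (forall S, 0 < W S) -> `|agg W t s| <= lam.
Proof.
move=> W_gt0; apply: norm_convex_comb_le; first exact: ltW.
- by move=> S _; rewrite divr_ge0 ?sumr_ge0 // => [|S' _]; exact/ltW.
- rewrite -mulr_suml.
  have [->|W_neq0] := eqVneq (\sum_(S in A t s) W S) 0; first by rewrite invr0 mulr0.
  by rewrite mulfV.
- by move=> S _; apply/norm_trunc_le/ltW.
Qed.

Lemma active_mass_mixable t s :
  \sum_(S in A t s) w t S * expR (- alpha lam * ell S s)
    <= (\sum_(S in A t s) w t S) * expR (- alpha lam * (trunc lam (y s) - agg (w t) t s) ^+ 2).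
Proof.
have [->|[S1 S1A]] := set_0Vmem (A t s); first by rewrite !big_set0 mul0r.
set W := \sum_(S in A t s) w t S.
have W_gt0 : 0 < W by apply: sumr_gt0_mem S1A _ => S; exact: weights_gt0.
pose p S := w t S / W.
pose v S := trunc lam (y s) - trunc lam (expert S s).
have p_sum1 : \sum_(S in A t s) p S = 1 by rewrite -mulr_suml mulfV ?gt_eqF.
have -> : trunc lam (y s) - agg (w t) t s = \sum_(S in A t s) p S * v S.
  rewrite (eq_bigr (fun S => p S * trunc lam (y s) - p S * trunc lam (expert S s))).
    by rewrite sumrB -mulr_suml p_sum1 mul1r.
  by move=> S _; rewrite /v mulrBr.
have -> : \sum_(S in A t s) w t S * expR (- alpha lam * ell S s) =
    W * \sum_(S in A t s) p S * expR (- alpha lam * v S ^+ 2).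
  rewrite mulr_sumr; apply: eq_bigr => S _; rewrite /p /v /loss.
  by field; rewrite gt_eqF.
rewrite ler_pM2l //; apply: (@expR_sq_jensen _ _ _ _ _ _ (2 * lam)).
- exact: alpha_ge0.
- by rewrite mulr_ge0 // ltW.
- have -> : 2 * alpha lam * (2 * lam) ^+ 2 = alpha lam * (8 * lam ^+ 2) by ring.
  by rewrite mul_alpha_8sqr.
- by move=> S _; rewrite divr_ge0 // ltW ?weights_gt0.
- exact: p_sum1.
- move=> S _; apply: le_trans (ler_normB _ _) _.
  by rewrite mulr2n mulrDl mul1r lerD // norm_trunc_le // ltW.
Qed.

Lemma update_active_ge t s S : S \in A t s ->
  w t S * expR (alpha lam * ((trunc lam (y s) - agg (w t) t s) ^+ 2 - ell S s))
    <= upd (w t) t s S.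
Proof.
move=> SA; have := active_mass_mixable t s; set al := alpha lam.
set lh := (_ - agg (w t) t s) ^+ 2; set D := \sum_(S' in _) _ * _; set W := \sum_(S' in _) _.
rewrite mulNr expRN => D_le.
have D_gt0 : 0 < D by apply: sumr_gt0_mem SA _ => S'; rewrite mulr_gt0 ?expR_gt0 ?weights_gt0.
rewrite /update SA -/al -/D -/W [X in _ <= X]mulrAC ler_pdivlMr //; clearbody al.
have -> : expR (al * (lh - ell S s)) = expR (- al * ell S s) * expR (al * lh).
  by rewrite -expRD; congr expR; ring.
rewrite -!mulrA ler_pM2l ?weights_gt0 // ler_pM2l ?expR_gt0 //.
by rewrite mulrC -ler_pdivlMr ?expR_gt0.
Qed.

Section OneExpert.
Variables (S : {set K}) (SSs : S \in Ss).

Definition active_regret (s : K) : R :=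
  if S \in A (index s rho) s
  then (trunc lam (y s) - agg_output Ss r lam rho y s) ^+ 2 - ell S s
  else 0.

Definition cum_regret (t : nat) : R := \sum_(s | (index s rho < t)%N) active_regret s.

Lemma cum_regret_succ t : (t < size rho)%N ->
  cum_regret t.+1 = cum_regret t + active_regret (nth x0 rho t).
Proof.
move=> t_lt; rewrite /cum_regret (bigD1 (nth x0 rho t)) /= ?index_uniq // addrC.
congr (_ + _); apply: eq_bigl => k; rewrite ltnS leq_eqVlt.
have [<-|kt] := eqVneq (index k rho) t; first by rewrite nth_index ?eqxx ?ltnn.
by rewrite /= andb_idr // => _; apply: contraNneq kt => ->; rewrite index_uniq.
Qed.

Lemma weights_ge_cum_regret t : (t <= size rho)%N ->
  #|Ss|%:R^-1 * expR (alpha lam * cum_regret t) <= w t S.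
Proof.
elim: t => [_|t IH t_lt].
  by rewrite /cum_regret big_pred0 ?mulr0 ?expR0 ?mulr1 /= ?mul1r // => k; rewrite ltn0.
have {}IH := IH (ltnW t_lt).
rewrite cum_regret_succ // weights_succ //; set s := nth x0 rho t.
have its : index s rho = t by rewrite index_uniq.
rewrite /active_regret /agg_output its; case: ifP => SA; last by rewrite addr0 /update SA.
apply: le_trans _ (update_active_ge _ _ _ SA).
by rewrite mulrDr expRD mulrA ler_wpM2r ?expR_ge0.
Qed.

Lemma cum_regret_le : cum_regret (size rho) <= 8 * lam ^+ 2 * ln #|Ss|%:R.
Proof.
have Ss_gt0 : (0 : R) < #|Ss|%:R by rewrite ltr0n.
have := le_trans (weights_ge_cum_regret _ (leqnn (size rho))) (weights_le1 _ _ SSs).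
rewrite ler_pdivrMl // mulr1 => expR_le.
have aD_le : alpha lam * cum_regret (size rho) <= ln #|Ss|%:R.
  by rewrite -[X in X <= _]expRK ler_ln ?posrE ?expR_gt0.
have -> : cum_regret (size rho) = 8 * lam ^+ 2 * (alpha lam * cum_regret (size rho)).
  by rewrite mulrA [_ * alpha lam]mulrC mul_alpha_8sqr mul1r.
by rewrite ler_wpM2l // mulr_ge0 // sqr_ge0.
Qed.

(* [S] can only be inactive at the first revealed point of [S]. *)
Lemma inactive_at_most_once s1 s2 : s1 \in S -> s2 \in S ->
  S \notin A (index s1 rho) s1 -> S \notin A (index s2 rho) s2 -> s1 = s2.
Proof.
move=> s1S s2S; rewrite !inE SSs s1S s2S /= !negb_or => /andP[_ n1] /andP[_ n2].
have [lt|lt|eq] := ltngtP (index s1 rho) (index s2 rho).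
- by case/negP: n2; apply/existsP; exists s1; rewrite !inE in_take ?rho_total // lt s1S.
- by case/negP: n1; apply/existsP; exists s2; rewrite !inE in_take ?rho_total // lt s2S.
- by rewrite -(nth_index x0 (rho_total s1)) eq nth_index.
Qed.

Lemma inactive_penalty_le :
  \sum_(s in S) (if S \in A (index s rho) s then 0 else 4 * lam ^+ 2) <= 4 * lam ^+ 2.
Proof.
have lam4_ge0 : 0 <= 4 * lam ^+ 2 :> R by rewrite mulr_ge0 // sqr_ge0.
have [/existsP[s0 /andP[s0S s0n]]|/existsPn all_active] :=
  boolP [exists s in S, S \notin A (index s rho) s].
- rewrite (bigD1 s0) //= (negbTE s0n) big1 ?addr0 // => s /andP[sS s_neq].
  case: ifP => // /negbT sn.
  by rewrite (inactive_at_most_once _ _ sS s0S sn s0n) eqxx in s_neq.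
- rewrite big1 // => s sS.
  by have := all_active s; rewrite sS /= negbK => ->.
Qed.

Lemma sqr_agg_err_le s :
  (y s - agg_output Ss r lam rho y s) ^+ 2 <=
    (y s - expert S s) ^+ 2 + active_regret s
    + (if S \in A (index s rho) s then 0 else 4 * lam ^+ 2)
    + 2 * (y s - trunc lam (y s)) ^+ 2
    + 4 * lam ^+ 2 * (if lam < `|y s| then 1 else 0).
Proof.
have lam_ge0 : 0 <= lam by exact: ltW.
have agg_le : `|agg_output Ss r lam rho y s| <= lam.
  by apply: agg_pred_norm_le => S'; exact: weights_gt0.
have := sqr_sub_le_trunc _ (y s) _ agg_le.
suff : (trunc lam (y s) - agg_output Ss r lam rho y s) ^+ 2 <=
    (y s - expert S s) ^+ 2 + active_regret s
    + (if S \in A (index s rho) s then 0 else 4 * lam ^+ 2) by lra.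
have := sqr_ge0 (y s - expert S s).
rewrite /active_regret; case: ifP => _.
  by have := sqr_trunc_sub_le lam (y s) (expert S s) lam_ge0; rewrite /loss; lra.
by have := sqr_sub_le_4sqr (norm_trunc_le lam (y s) lam_ge0) agg_le; lra.
Qed.

Lemma regret_bound :
  \sum_(s in S) (y s - agg_output Ss r lam rho y s) ^+ 2 <=
    \sum_(s in S) (y s - expert S s) ^+ 2
    + 8 * lam ^+ 2 * ln (expR 1 * (#|Ss|%:R))
    + 2 * \sum_(s in S) (y s - trunc lam (y s)) ^+ 2
    + 4 * lam ^+ 2 * \sum_(s in S) (if lam < `|y s| then 1 else 0).
Proof.
apply: le_trans (ler_sum _ (fun s _ => sqr_agg_err_le s)) _.
rewrite !big_split /= -!mulr_sumr ln_expR1M ?ltr0n // mulrDr mulr1.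
have regret_le : \sum_(s in S) active_regret s <= 8 * lam ^+ 2 * ln #|Ss|%:R.
  apply: le_trans cum_regret_le; rewrite le_eqVlt; apply/orP; left; apply/eqP.
  rewrite /cum_regret [RHS](eq_bigl xpredT); last by move=> k; rewrite index_mem rho_total.
  rewrite [RHS](bigID (mem S)) /= [X in _ = _ + X]big1 ?addr0 // => s /negbTE sS.
  by rewrite /active_regret inE sS andbF.
have := inactive_penalty_le; have := sqr_ge0 lam; lra.
Qed.

End OneExpert.
End ExponentialWeights.

Theorem mainTheorem1 (R : realType) (K : finType) (Ss : {set {set K}})
    (r : online_rule R K) (lam : R) (y : K -> R) (rho : seq K) :
  (forall S, S \in Ss -> S != finset.set0) ->
  1 < lam ->
  uniq rho -> (forall k : K, k \in rho) ->
  forall S, S \in Ss ->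
  \sum_(s in S) (y s - agg_output Ss r lam rho y s) ^+ 2 <=
    \sum_(s in S) (y s - expert_pred r rho y S s) ^+ 2
    + 8 * lam ^+ 2 * ln (expR 1 * (#|Ss|%:R))
    + 2 * \sum_(s in S) (y s - trunc lam (y s)) ^+ 2
    + 4 * lam ^+ 2 * \sum_(s in S) (if lam < `|y s| then 1 else 0).
Proof.
move=> Ss_nonempty lam_gt1 rho_uniq rho_total S SSs.
have /set0Pn [x0 _] := Ss_nonempty S SSs.
have card_Ss_gt0 : (0 < #|Ss|)%N by rewrite card_gt0; apply/set0Pn; exists S.
exact: (@regret_bound _ _ _ _ _ _ _ x0 (lt_trans ltr01 lam_gt1) card_Ss_gt0 rho_uniq rho_total _ SSs).
Qed.
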